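(* Let $X\colon\mathcal H\leftarrow\mathcal G$ be a groupoid correspondence, let $V_1,V_2\subseteq X$, $W\subseteq\mathcal G$, $Z\subseteq\mathcal H$ be slices, and let $\xi\in C_c(V_1)$, $\eta\in C_c(V_2)$, $\gamma\in C_c(W)$, $\zeta\in C_c(Z)$ (extended by zero). Then $V_1W=\{xg:x\in V_1,g\in W,s(x)=r(g)\}\subseteq X$, $\langle V_1|V_2\rangle=\{\langle x_1|x_2\rangle:x_1\in V_1,x_2\in V_2,p(x_1)=p(x_2)\}\subseteq\mathcal G$ and $ZV_1=\{hx:h\in Z,x\in V_1,s(h)=r(x)\}\subseteq X$ are slices. For $y\in V_1W$ there are unique $x\in V_1$, $g\in W$ with $xg=y$, and $\xi*\gamma\in C_c(V_1W)$ with $(\xi*\gamma)(y)=\xi(x)\gamma(g)$. For $g\in\langle V_1|V_2\rangle$ there are unique $x_1\in V_1$, $x_2\in V_2$ with $g=\langle x_1|x_2\rangle$, and $\langle\xi|\eta\rangle\in C_c(\langle V_1|V_2\rangle)$ with $\langle\xi|\eta\rangle(g)=\overline{\xi(x_1)}\eta(x_2)$. For $y\in ZV_1$ there are unique $h\in Z$, $x\in V_1$ with $y=hx$, and $\zeta*\xi\in C_c(ZV_1)$ with $(\zeta*\xi)(y)=\zeta(h)\xi(x)$.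
   Context: Groupoids are étale ($r,s$ local homeomorphisms, continuous multiplication and inversion) with Hausdorff locally compact object space. A groupoid correspondence $X\colon\mathcal H\leftarrow\mathcal G$: space with commuting continuous left $\mathcal H$-action (anchor $r$) and right $\mathcal G$-action (anchor $s$), $s$ a local homeomorphism, right action free and proper. $p\colon X\to X/\mathcal G$ is the orbit projection; for $p(x_1)=p(x_2)$, $\langle x_1|x_2\rangle$ is the unique $g\in\mathcal G$ with $s(x_1)=r(g)$, $x_2=x_1g$. A slice of $\mathcal G$ is an open $V\subseteq\mathcal G$ on which $s$ and $r$ are injective; a slice of $X$ is an open $V\subseteq X$ on which $s$ and $p$ are injective. The operations are $\xi*\gamma(x)=\sum_{g\in\mathcal G^{s(x)}}\xi(xg)\gamma(g^{-1})$, $\langle\xi|\eta\rangle(g)=\sum_{x:\,s(x)=r(g)}\overline{\xi(x)}\eta(xg)$, $\zeta*\xi(x)=\sum_{h\in\mathcal H^{r(x)}}\zeta(h)\xi(h^{-1}x)$, where $\mathcal G^{y}=r^{-1}(y)$. *)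

From HB Require Import structures.
From mathcomp Require Import all_boot all_order all_algebra.
From mathcomp Require Import all_classical all_reals all_analysis.
From mathcomp Require Import complex.
Import Order.TTheory GRing.Theory Num.Theory.
Import numFieldTopology.Exports.

Set Implicit Arguments.
Unset Strict Implicit.
Unset Printing Implicit Defensive.

Local Open Scope classical_set_scope.
Local Open Scope ring_scope.

(* f is a local homeomorphism: continuous, and every point has an open
   neighbourhood U on which f is injective and open (so f(U) is open and
   f|_U : U -> f(U) is a homeomorphism). *)
Definition local_homeo (S T : topologicalType) (f : S -> T) : Prop :=
  continuous f /\
  forall x, exists U : set S,
    [/\ open U, U x,
        (forall a b, U a -> U b -> f a = f b -> a = b) &
        (forall W : set S, open W -> W `<=` U -> open (f @` W))].

(* Etale groupoid with Hausdorff locally compact object cspace.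
   Multiplication gmul g h is meaningful when gsrc g = grng h. *)
Record etale_groupoid := EtaleGroupoid {
  garr : topologicalType;
  gobj : topologicalType;
  grng : garr -> gobj;
  gsrc : garr -> gobj;
  gmul : garr -> garr -> garr;
  ginv : garr -> garr;
  gunit : gobj -> garr;
  grng_mul : forall g h, gsrc g = grng h -> grng (gmul g h) = grng g;
  gsrc_mul : forall g h, gsrc g = grng h -> gsrc (gmul g h) = gsrc h;
  gmulA : forall g h k, gsrc g = grng h -> gsrc h = grng k ->
    gmul (gmul g h) k = gmul g (gmul h k);
  grng_unit : forall x, grng (gunit x) = x;
  gsrc_unit : forall x, gsrc (gunit x) = x;
  gmul_unitl : forall g, gmul (gunit (grng g)) g = g;
  gmul_unitr : forall g, gmul g (gunit (gsrc g)) = g;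
  grng_inv : forall g, grng (ginv g) = gsrc g;
  gsrc_inv : forall g, gsrc (ginv g) = grng g;
  gmul_invr : forall g, gmul g (ginv g) = gunit (grng g);
  gmul_invl : forall g, gmul (ginv g) g = gunit (gsrc g);
  obj_hausdorff : hausdorff_space gobj;
  obj_locally_compact : locally_compact [set: gobj];
  grng_local_homeo : local_homeo grng;
  gsrc_local_homeo : local_homeo gsrc;
  gmul_cont : {within [set p : garr * garr | gsrc p.1 = grng p.2],
                 continuous (fun p => gmul p.1 p.2)};
  ginv_cont : continuous ginv;
  gunit_cont : continuous gunit
}.

Record groupoid_corr (H G : etale_groupoid) := GroupoidCorr {
  cspace : topologicalType;
  anc_r : cspace -> gobj H;
  anc_s : cspace -> gobj G;
  lact : garr H -> cspace -> cspace;   (* h x, defined when gsrc h = anc_r x *)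
  ract : cspace -> garr G -> cspace;   (* x g, defined when anc_s x = grng g *)
  anc_r_cont : continuous anc_r;
  anc_s_local_homeo : local_homeo anc_s;
  anc_r_lact : forall h x, gsrc h = anc_r x -> anc_r (lact h x) = grng h;
  anc_s_lact : forall h x, gsrc h = anc_r x -> anc_s (lact h x) = anc_s x;
  lact_unit : forall x, lact (gunit (anc_r x)) x = x;
  lact_mul : forall h k x, gsrc h = grng k -> gsrc k = anc_r x ->
    lact (gmul h k) x = lact h (lact k x);
  anc_s_ract : forall x g, anc_s x = grng g -> anc_s (ract x g) = gsrc g;
  anc_r_ract : forall x g, anc_s x = grng g -> anc_r (ract x g) = anc_r x;
  ract_unit : forall x, ract x (gunit (anc_s x)) = x;
  ract_mul : forall x g k, anc_s x = grng g -> gsrc g = grng k ->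
    ract x (gmul g k) = ract (ract x g) k;
  lact_ract : forall h x g, gsrc h = anc_r x -> anc_s x = grng g ->
    lact h (ract x g) = ract (lact h x) g;
  lact_cont : {within [set p : garr H * cspace | gsrc p.1 = anc_r p.2],
                 continuous (fun p => lact p.1 p.2)};
  ract_cont : {within [set p : cspace * garr G | anc_s p.1 = grng p.2],
                 continuous (fun p => ract p.1 p.2)};
  ract_free : forall x g, anc_s x = grng g -> ract x g = x -> g = gunit (anc_s x);
  ract_proper : forall K : set (cspace * cspace), compact K ->
    compact ([set p : cspace * garr G | anc_s p.1 = grng p.2] `&`
             (fun p => (p.1, ract p.1 p.2)) @^-1` K)
}.

Arguments cspace {H G}.
Arguments anc_r {H G}.
Arguments anc_s {H G}.
Arguments lact {H G}.
Arguments ract {H G}.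

Definition Cplx (R : realType) : numClosedFieldType := R[i].

Section Defs.
Variables (H G : etale_groupoid) (X : groupoid_corr H G).

(* p(x1) = p(x2), p : X -> X/G the orbit projection *)
Definition same_orbit (x1 x2 : cspace X) : Prop :=
  exists g, anc_s X x1 = grng g /\ x2 = ract X x1 g.

(* g = <x1|x2> : s(x1) = r(g) and x2 = x1 g *)
Definition bracket_rel (x1 x2 : cspace X) (g : garr G) : Prop :=
  anc_s X x1 = grng g /\ x2 = ract X x1 g.

Definition slice_arr (K : etale_groupoid) (V : set (garr K)) : Prop :=
  [/\ open V,
      (forall a b, V a -> V b -> gsrc a = gsrc b -> a = b) &
      (forall a b, V a -> V b -> grng a = grng b -> a = b)].

Definition slice_sp (V : set (cspace X)) : Prop :=
  [/\ open V,
      (forall a b, V a -> V b -> anc_s X a = anc_s X b -> a = b) &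
      (forall a b, V a -> V b -> same_orbit a b -> a = b)].

Definition rprod (V : set (cspace X)) (W : set (garr G)) : set (cspace X) :=
  [set y | exists x g, [/\ V x, W g, anc_s X x = grng g & y = ract X x g]].

Definition bracket_set (V1 V2 : set (cspace X)) : set (garr G) :=
  [set g | exists x1 x2, [/\ V1 x1, V2 x2 & bracket_rel x1 x2 g]].

Definition lprod (Z : set (garr H)) (V : set (cspace X)) : set (cspace X) :=
  [set y | exists h x, [/\ Z h, V x, gsrc h = anc_r X x & y = lact X h x]].

Variable R : realType.

Definition Cc_on (T : topologicalType) (V : set T) (f : T -> Cplx R) : Prop :=
  [/\ (forall x, ~ V x -> f x = 0),
      {within V, continuous f} &
      exists K : set T, [/\ compact K, K `<=` V & forall x, f x != 0 -> K x]].

Definition conv_r (xi : cspace X -> Cplx R) (gam : garr G -> Cplx R) : cspace X -> Cplx R :=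
  fun x => \sum_(g \in [set g : garr G | grng g = anc_s X x])
             xi (ract X x g) * gam (ginv g).

Definition cinner (xi eta : cspace X -> Cplx R) : garr G -> Cplx R :=
  fun g => \sum_(x \in [set x : cspace X | anc_s X x = grng g])
             (xi x)^* * eta (ract X x g).

Definition conv_l (zet : garr H -> Cplx R) (xi : cspace X -> Cplx R) : cspace X -> Cplx R :=
  fun x => \sum_(h \in [set h : garr H | grng h = anc_r X x])
             zet h * xi (lact X (ginv h) x).

End Defs.

Arguments slice_arr {K}.

(* Each product set is parametrised near any of its points by its factors,
   continuously: near y0 = x0 g0 the arrow is recovered as sigma (s y), with
   sigma the inverse of the local homeomorphism s on the slice W, and then
   x = y g^-1; near <x1|x2> = g0 one takes x1 = sigma (r g) with sigma
   inverting s on V1, and x2 = x1 g; near h0 x0 one takes h = sigma (r y) and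
   x = h^-1 y.  Such a local factorisation makes the product set open, and the
   slice conditions collapse each convolution sum to the single term
   xi(x) gam(g), so the convolution is continuous there.  Its support lies in
   the product of the supports, which is compact as the continuous image of a
   compact subset of the fibre product (for <V1|V2> one uses properness of the
   right action instead). *)

From HB Require Import structures.
From mathcomp Require Import all_boot all_order all_algebra.
From mathcomp Require Import all_classical all_reals all_analysis.
From mathcomp Require Import complex.
Import Order.TTheory GRing.Theory Num.Theory.
Import numFieldTopology.Exports numFieldNormedType.Exports.
Local Open Scope classical_set_scope.
Local Open Scope ring_scope.
Set Implicit Arguments.
Unset Strict Implicit.
Unset Printing Implicit Defensive.

Section LocalHomeo.
Variables (S T : topologicalType) (f : S -> T).
Hypothesis f_lh : local_homeo f.

Lemma local_homeo_open (O : set S) : open O -> open (f @` O).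
Proof.
move=> oO; rewrite openE => _ [a Oa <-].
have [U [oU Ua _ openU]] := f_lh.2 a.
have oOU : open (f @` (O `&` U)) by apply: openU; [exact: openI | exact: subIsetr].
apply: (@filterS _ _ _ (f @` (O `&` U))); first by move=> _ [b [Ob _] <-]; exists b.
by apply: open_nbhs_nbhs; split => //; exists a.
Qed.

Lemma local_homeo_section (W : set S) a :
  open W -> (forall b c, W b -> W c -> f b = f c -> b = c) -> W a ->
  exists sigma : T -> S, [/\ sigma (f a) = a, {for f a, continuous sigma} &
    \forall t \near f a, W (sigma t) /\ f (sigma t) = t].
Proof.
move=> oW injW Wa; pose sigma t := xget a [set b | W b /\ f b = t].
have sigmaP b : W b -> W (sigma (f b)) /\ f (sigma (f b)) = f b.
  by move=> Wb; apply: (@xgetPex _ a [set c | W c /\ f c = f b]); exists b.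
have sigmaK b : W b -> sigma (f b) = b.
  by move=> Wb; have [Wsb fsb] := sigmaP b Wb; exact: injW fsb.
exists sigma; split; first exact: sigmaK.
- move=> N; rewrite /= sigmaK // nbhsE => -[N' [oN' N'a] N'N].
  have [U [oU Ua _ openU]] := f_lh.2 a.
  have oO : open (f @` (N' `&` W `&` U)).
    by apply: openU; [apply: openI => //; exact: openI | exact: subIsetr].
  apply: (@filterS _ _ _ (f @` (N' `&` W `&` U))).
    by move=> _ [b [[N'b Wb] _] <-]; rewrite /= sigmaK //; exact: N'N.
  by apply: open_nbhs_nbhs; split => //; exists a.
- apply: (@filterS _ _ _ (f @` W)); first by move=> _ [b Wb <-]; exact: sigmaP.
  by apply: open_nbhs_nbhs; split; [exact: local_homeo_open | exists a].
Qed.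

End LocalHomeo.

Lemma continuous_within_comp (T S U : topologicalType) (A : set S) (f : S -> U)
    (p : T -> S) (t : T) :
  {within A, continuous f} -> {for t, continuous p} ->
  (\forall t' \near t, A (p t')) -> {for t, continuous (f \o p)}.
Proof.
move=> /subspace_continuousP fA pt nA; apply: cvg_trans (fA _ (nbhs_singleton nA)).
move=> P /= /pt; rewrite !nbhs_simpl /= => nP.
by near=> t'; apply: (near nP t') => //; apply: (near nA t').
Unshelve. all: by end_near.
Qed.

Lemma closed_fiber (A B C : topologicalType) (f : A -> C) (g : B -> C) :
  hausdorff_space C -> continuous f -> continuous g ->
  closed [set p : A * B | f p.1 = g p.2].
Proof.
move=> hC cf cg [a b] clp; apply: hC => P Q nP nQ.
have nPQ : nbhs (a, b) (f @^-1` P `*` g @^-1` Q).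
  by exists (f @^-1` P, g @^-1` Q) => //; split; [exact: cf | exact: cg].
by have [[a' b'] [/= -> [Pa Qb]]] := clp _ nPQ; exists (g b').
Qed.

Lemma compact_fiber (A B C : topologicalType) (f : A -> C) (g : B -> C) K1 K2 :
  hausdorff_space C -> continuous f -> continuous g -> compact K1 -> compact K2 ->
  compact ((K1 `*` K2) `&` [set p : A * B | f p.1 = g p.2]).
Proof.
move=> hC cf cg cK1 cK2.
by apply: compact_closedI; [exact: compact_setX | exact: closed_fiber].
Qed.

Definition locally_factored (T U : topologicalType) (Q : T -> U -> Prop) :=
  forall t u, Q t u -> exists d : T -> U,
    [/\ d t = u, {for t, continuous d} & \forall t' \near t, Q t' (d t')].

Section LocallyFactored.
Variables (T U : topologicalType) (Q : T -> U -> Prop).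
Hypothesis lfQ : locally_factored Q.

Lemma locally_factored_open : open [set t | exists u, Q t u].
Proof.
rewrite openE => t [u Qtu]; have [d [_ _ nQ]] := lfQ Qtu.
by apply: filterS nQ => t' Qd; exists (d t').
Qed.

Lemma locally_factored_continuous (V : topologicalType) (F : U -> V) (f : T -> V) :
  (forall t u, Q t u -> f t = F u /\ {for u, continuous F}) ->
  {within [set t | exists u, Q t u], continuous f}.
Proof.
move=> fF; rewrite continuous_open_subspace; last exact: locally_factored_open.
move=> t /set_mem [u Qtu]; have [d [dt dc nQ]] := lfQ Qtu.
have [ft Fc] := fF t u Qtu.
have Fd_f : \forall t' \near t, F (d t') = f t' by apply: filterS nQ => t' /fF [->].
apply: cvg_trans (near_eq_cvg Fd_f) _; rewrite ft -dt.
by apply: continuous_comp dc _; rewrite dt.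
Qed.

End LocallyFactored.

Lemma conjC_continuous (K : numClosedFieldType) : continuous (@Num.conj K).
Proof.
move=> z; apply/(@cvgrPdist_lt _ _ _ _ (nbhs_filter z)) => e e0.
by exists e => // t /=; rewrite -rmorphB norm_conjC.
Qed.

Lemma continuous_mul_pair (A B : topologicalType) (K : numFieldType)
    (F1 : A -> K) (F2 : B -> K) a b :
  {for a, continuous F1} -> {for b, continuous F2} ->
  {for (a, b), continuous (fun p => F1 p.1 * F2 p.2)}.
Proof.
move=> c1 c2; apply: cvgM.
- exact: (cvg_comp _ _ (@cvg_fst _ _ (nbhs a) (nbhs b) _) c1).
- exact: (cvg_comp _ _ (@cvg_snd _ _ (nbhs a) (nbhs b) _) c2).
Qed.

Section FiniteSums.
Variables (T : choiceType) (K : nmodType) (S : set T) (F : T -> K).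

Lemma fsum_supp1 a : S a -> (forall i, S i -> F i != 0 -> i = a) ->
  \sum_(i \in S) F i = F a.
Proof.
move=> Sa supp_a; rewrite -(fsbig_widen [set a] S F) ?fsbig_set1 //; first by move=> i ->.
move=> i [Si /= nia]; apply/eqP; apply: contrapT => /negP Fi.
exact/nia/supp_a.
Qed.

Lemma fsum_neq0 : \sum_(i \in S) F i != 0 -> exists2 i, S i & F i != 0.
Proof. exact: (@fsbigN1 _ _ _ unit _ S (fun _ => F) tt). Qed.

End FiniteSums.

Section CompactSupport.
Variables (R : realType) (T : topologicalType).
Implicit Types (V K : set T) (f : T -> Cplx R).

Lemma Cc_on_supp V f : Cc_on V f -> [set x | f x != 0] `<=` V.
Proof.
by case=> f0 _ _ x /= fx; apply: contrapT => Vx; move: fx; rewrite f0 ?eqxx.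
Qed.

Lemma Cc_on_continuous_at V f x : open V -> Cc_on V f -> V x -> {for x, continuous f}.
Proof. by move=> oV [_ + _] Vx; rewrite continuous_open_subspace // => /(_ x (mem_set Vx)). Qed.

Lemma Cc_on_intro V f K : {within V, continuous f} -> compact K -> K `<=` V ->
  [set x | f x != 0] `<=` K -> Cc_on V f.
Proof.
move=> fc cK KV fK; split => //; last by exists K.
by move=> x Vx; apply/eqP; apply: contrapT => /negP /fK /KV.
Qed.

End CompactSupport.

Section Groupoid.
Variable K : etale_groupoid.
Implicit Types g h : garr K.

Lemma grng_continuous : continuous (@grng K).
Proof. exact: (grng_local_homeo K).1. Qed.

Lemma gsrc_continuous : continuous (@gsrc K).
Proof. exact: (gsrc_local_homeo K).1. Qed.

Lemma ginvK : involutive (@ginv K).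
Proof.
move=> g; have g_eq : g = gmul (gmul (ginv (ginv g)) (ginv g)) g.
  by rewrite gmul_invl gsrc_inv gmul_unitl.
rewrite [RHS]g_eq gmulA ?gsrc_inv ?grng_inv // gmul_invl.
by rewrite -[gsrc g]grng_inv -gsrc_inv gmul_unitr.
Qed.

End Groupoid.

Section Correspondence.
Variables (H G : etale_groupoid) (X : groupoid_corr H G).
Implicit Types (x y : cspace X) (g k : garr G) (h : garr H).

Lemma anc_s_continuous : continuous (anc_s X).
Proof. exact: (anc_s_local_homeo X).1. Qed.

Lemma ractK x g : anc_s X x = grng g -> ract X (ract X x g) (ginv g) = x.
Proof. by move=> e; rewrite -ract_mul ?grng_inv // gmul_invr -e ract_unit. Qed.

Lemma ractKV x g : anc_s X x = gsrc g -> ract X (ract X x (ginv g)) g = x.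
Proof. by move=> e; rewrite -{2}[g]ginvK ractK // grng_inv. Qed.

Lemma lactK x h : gsrc h = anc_r X x -> lact X (ginv h) (lact X h x) = x.
Proof. by move=> e; rewrite -lact_mul ?gsrc_inv // gmul_invl e lact_unit. Qed.

Lemma lactKV x h : anc_r X x = grng h -> lact X h (lact X (ginv h) x) = x.
Proof. by move=> e; rewrite -{1}[h]ginvK lactK // gsrc_inv. Qed.

Lemma ract_inj x g k : anc_s X x = grng g -> anc_s X x = grng k ->
  ract X x g = ract X x k -> g = k.
Proof.
move=> eg ek egk.
have sgk : gsrc g = gsrc k by rewrite -(anc_s_ract eg) -(anc_s_ract ek) egk.
have kVg : gmul k (ginv g) = gunit (anc_s X x).
  by apply: ract_free; rewrite ?grng_mul ?grng_inv // ract_mul ?grng_inv // -egk ractK.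
have kVgg : gmul (gmul k (ginv g)) g = k.
  by rewrite gmulA ?grng_inv ?gsrc_inv -?sgk // gmul_invl sgk gmul_unitr.
by rewrite -kVgg kVg eg gmul_unitl.
Qed.

Lemma lact_inj x y h : gsrc h = anc_r X x -> gsrc h = anc_r X y ->
  lact X h x = lact X h y -> x = y.
Proof. by move=> ex ey exy; rewrite -(lactK ex) -(lactK ey) exy. Qed.

Lemma same_orbit_ract x g : anc_s X x = grng g -> same_orbit x (ract X x g).
Proof. by move=> e; exists g. Qed.

Lemma same_orbit_sym x y : same_orbit x y -> same_orbit y x.
Proof.
move=> [g [e ->]]; exists (ginv g).
by rewrite anc_s_ract ?grng_inv ?ractK.
Qed.

Lemma same_orbit_trans x y z : same_orbit x y -> same_orbit y z -> same_orbit x z.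
Proof.
move=> [g [e ->]] [k [e' ->]]; rewrite anc_s_ract // in e'.
by exists (gmul g k); rewrite grng_mul // ract_mul.
Qed.

Lemma ract_continuous_at (T : topologicalType) (u : T -> cspace X) (v : T -> garr G) t :
  {for t, continuous u} -> {for t, continuous v} ->
  (\forall t' \near t, anc_s X (u t') = grng (v t')) ->
  {for t, continuous (fun t' => ract X (u t') (v t'))}.
Proof.
move=> cu cv nA.
exact: (continuous_within_comp (@ract_cont _ _ X) (cvg_pair cu cv) nA).
Qed.

Lemma lact_continuous_at (T : topologicalType) (u : T -> garr H) (v : T -> cspace X) t :
  {for t, continuous u} -> {for t, continuous v} ->
  (\forall t' \near t, gsrc (u t') = anc_r X (v t')) ->
  {for t, continuous (fun t' => lact X (u t') (v t'))}.
Proof.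
move=> cu cv nA.
exact: (continuous_within_comp (@lact_cont _ _ X) (cvg_pair cu cv) nA).
Qed.

End Correspondence.

Section RightProduct.
Variables (H G : etale_groupoid) (X : groupoid_corr H G) (R : realType).
Implicit Types (V : set (cspace X)) (W : set (garr G)).

Definition rfactor V W (y : cspace X) (p : cspace X * garr G) :=
  [/\ V p.1, W p.2, anc_s X p.1 = grng p.2 & ract X p.1 p.2 = y].

Lemma rprodE V W : rprod V W = [set y | exists p, rfactor V W y p].
Proof.
apply/seteqP; split => [_ [x [g [Vx Wg e ->]]] | _ [[x g] [Vx Wg e <-]]].
- by exists (x, g).
- by exists x, g.
Qed.

Lemma rprodS V V' W W' : V `<=` V' -> W `<=` W' -> rprod V W `<=` rprod V' W'.
Proof. by move=> VV' WW' _ [x [g [Vx Wg e ->]]]; exists x, g; split; auto. Qed.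

Lemma rprod_compact V W : compact V -> compact W -> compact (rprod V W).
Proof.
move=> cV cW.
have -> : rprod V W = (fun p => ract X p.1 p.2) @`
    ((V `*` W) `&` [set p | anc_s X p.1 = grng p.2]).
  apply/seteqP; split => [_ [x [g [Vx Wg e ->]]] | _ [[x g] [[Vx Wg] /= e] <-]].
  - by exists (x, g).
  - by exists x, g.
apply: continuous_compact; first by apply: continuous_subspaceW (@ract_cont _ _ X) => p [].
exact: compact_fiber (@obj_hausdorff G) (@anc_s_continuous _ _ X) (@grng_continuous G) cV cW.
Qed.

Lemma conv_r_supp (xi : cspace X -> Cplx R) (gam : garr G -> Cplx R) :
  [set y | conv_r xi gam y != 0] `<=` rprod [set x | xi x != 0] [set g | gam g != 0].
Proof.
move=> y /fsum_neq0 [k /= /esym yk]; rewrite mulf_eq0 negb_or => /andP [xi_yk gam_k].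
exists (ract X y k), (ginv k); split => //; last by rewrite ractK.
by rewrite anc_s_ract // grng_inv.
Qed.

Variables (V : set (cspace X)) (W : set (garr G)).
Hypotheses (sV : slice_sp V) (sW : slice_arr W).

Lemma rfactor_uniq y p q : rfactor V W y p -> rfactor V W y q -> p = q.
Proof.
case: sV sW => _ sVs _ [_ sWs _].
move: p q => [x g] [x' g'] [/= Vx Wg e <-] [/= Vx' Wg' e' exg].
have gg' : g = g' by apply: sWs => //; rewrite -(anc_s_ract e) -(anc_s_ract e') exg.
by subst g'; rewrite (sVs x x') // e e'.
Qed.

Lemma rfactor_local : locally_factored (rfactor V W).
Proof.
case: sV sW => oV _ _ [oW sWs _].
move=> _ [x0 g0] [/= Vx0 Wg0 e0 <-]; set y0 := ract X x0 g0.
have [sigma [sigma_g0 sigma_c near_sigma]] :=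
  local_homeo_section (gsrc_local_homeo G) oW sWs Wg0.
pose psi y := sigma (anc_s X y).
have sy0 : anc_s X y0 = gsrc g0 by rewrite anc_s_ract.
have psi_y0 : psi y0 = g0 by rewrite /psi sy0.
have psi_c : {for y0, continuous psi}.
  by apply: continuous_comp (@anc_s_continuous _ _ X y0) _; rewrite sy0.
have near_psi : \forall y \near y0, W (psi y) /\ gsrc (psi y) = anc_s X y.
  by move: near_sigma; rewrite -sy0 => /(@anc_s_continuous _ _ X y0).
pose x y := ract X y (ginv (psi y)).
have x_y0 : x y0 = x0 by rewrite /x psi_y0 ractK.
have x_c : {for y0, continuous x}.
  apply: ract_continuous_at; first exact: cvg_id.
    exact: continuous_comp psi_c (@ginv_cont G _).
  by apply: filterS near_psi => y [_ e]; rewrite grng_inv e.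
have near_V : \forall y \near y0, V (x y).
  by apply: x_c; rewrite x_y0; apply: open_nbhs_nbhs.
exists (fun y => (x y, psi y)); split; first by rewrite x_y0 psi_y0.
  exact: cvg_pair.
near=> y; have [Wpsi spsi] : W (psi y) /\ gsrc (psi y) = anc_s X y by near: y.
split => //=; first by near: y.
  by rewrite anc_s_ract ?grng_inv ?gsrc_inv.
by rewrite ractKV.
Unshelve. all: by end_near.
Qed.

Lemma rprod_slice : slice_sp (rprod V W).
Proof.
case: sV sW => _ sVs sVp [_ sWs sWr].
split; first by rewrite rprodE; exact: locally_factored_open rfactor_local.
- move=> _ _ [x [g [Vx Wg e ->]]] [x' [g' [Vx' Wg' e' ->]]].
  rewrite !anc_s_ract // => /(sWs _ _ Wg Wg') gg'; subst g'.
  by rewrite (sVs x x') // e e'.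
- move=> _ _ [x [g [Vx Wg e ->]]] [x' [g' [Vx' Wg' e' ->]]] orb.
  have xx' : x = x'.
    apply: sVp => //; apply: same_orbit_trans (same_orbit_ract e) _.
    exact: same_orbit_trans orb (same_orbit_sym (same_orbit_ract e')).
  by subst x'; rewrite (sWr g g') // -e -e'.
Qed.

Variables (xi : cspace X -> Cplx R) (gam : garr G -> Cplx R).
Hypotheses (cxi : Cc_on V xi) (cgam : Cc_on W gam).

Lemma conv_r_rfactor y p : rfactor V W y p -> conv_r xi gam y = xi p.1 * gam p.2.
Proof.
case: sW => _ sWs _; move: p => [x g] [/= Vx Wg e <-].
rewrite /conv_r (fsum_supp1 (a := ginv g)) /=.
- by rewrite ractK // ginvK.
- by rewrite grng_inv anc_s_ract.
move=> k /= rk; rewrite mulf_eq0 negb_or => /andP [_ /(Cc_on_supp cgam) Wk].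
rewrite -[k]ginvK; congr ginv; apply: sWs => //.
by rewrite gsrc_inv rk anc_s_ract.
Qed.

Lemma conv_r_Cc : Cc_on (rprod V W) (conv_r xi gam).
Proof.
case: (sV) (sW) => oV _ _ [oW _ _].
case: (cxi) (cgam) => _ _ [K1 [cK1 K1V xiK1]] [_ _ [K2 [cK2 K2W gamK2]]].
apply: (Cc_on_intro _ (rprod_compact cK1 cK2)).
- rewrite rprodE.
  apply: (locally_factored_continuous rfactor_local (F := fun p => xi p.1 * gam p.2)).
  move=> y [x g] yxg.
  split; first exact: conv_r_rfactor.
  case: yxg => Vx Wg _ _; apply: continuous_mul_pair.
  + exact: Cc_on_continuous_at oV cxi Vx.
  + exact: Cc_on_continuous_at oW cgam Wg.
- exact: rprodS.
- by move=> y /conv_r_supp; apply: rprodS.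
Qed.

End RightProduct.

Section InnerProduct.
Variables (H G : etale_groupoid) (X : groupoid_corr H G) (R : realType).
Implicit Types (V : set (cspace X)).

Definition bfactor V1 V2 (g : garr G) (p : cspace X * cspace X) :=
  [/\ V1 p.1, V2 p.2 & bracket_rel p.1 p.2 g].

Lemma bracket_setE V1 V2 : bracket_set V1 V2 = [set g | exists p, bfactor V1 V2 g p].
Proof.
apply/seteqP; split => [g [x1 [x2 gx]] | g [[x1 x2] gx]].
- by exists (x1, x2).
- by exists x1, x2.
Qed.

Lemma bracket_setS V1 V1' V2 V2' : V1 `<=` V1' -> V2 `<=` V2' ->
  bracket_set V1 V2 `<=` bracket_set V1' V2'.
Proof. by move=> VV1 VV2 g [x1 [x2 [V1x1 V2x2 gx]]]; exists x1, x2; split; auto. Qed.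

Lemma bracket_compact V1 V2 : compact V1 -> compact V2 -> compact (bracket_set V1 V2).
Proof.
move=> cV1 cV2.
have -> : bracket_set V1 V2 = snd @` ([set p | anc_s X p.1 = grng p.2] `&`
    (fun p => (p.1, ract X p.1 p.2)) @^-1` (V1 `*` V2)).
  apply/seteqP; split => [g [x1 [x2 [V1x1 V2x2 [e ex2]]]] | _ [[x g] [/= e [V1x V2xg]] <-]].
  - by exists (x1, g) => //; split => //=; rewrite -ex2.
  - by exists x, (ract X x g).
apply: continuous_compact; first by apply: continuous_subspaceT => p; exact: cvg_snd.
exact: ract_proper (compact_setX cV1 cV2).
Qed.

Lemma cinner_supp (xi eta : cspace X -> Cplx R) :
  [set g | cinner xi eta g != 0] `<=` bracket_set [set x | xi x != 0] [set x | eta x != 0].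
Proof.
move=> g /fsum_neq0 [x /= e]; rewrite mulf_eq0 negb_or conjC_eq0 => /andP [xi_x eta_xg].
by exists x, (ract X x g).
Qed.

Variables (V1 V2 : set (cspace X)).
Hypotheses (sV1 : slice_sp V1) (sV2 : slice_sp V2).

Lemma bfactor_uniq g p q : bfactor V1 V2 g p -> bfactor V1 V2 g q -> p = q.
Proof.
case: sV1 => _ sV1s _.
move: p q => [x1 x2] [x1' x2'] [/= V1x1 _ [e ->]] [/= V1x1' _ [e' ->]].
by rewrite (sV1s x1 x1') // e e'.
Qed.

Lemma bfactor_local : locally_factored (bfactor V1 V2).
Proof.
case: sV1 sV2 => oV1 sV1s _ [oV2 _ _].
move=> g0 [x1 x2] [/= V1x1 V2x2 [e0 ex2]].
have [sigma [sigma_x1 sigma_c near_sigma]] :=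
  local_homeo_section (anc_s_local_homeo X) oV1 sV1s V1x1.
pose chi g := sigma (grng g).
have chi_g0 : chi g0 = x1 by rewrite /chi -e0.
have chi_c : {for g0, continuous chi}.
  by apply: continuous_comp (@grng_continuous G g0) _; rewrite -e0.
have near_chi : \forall g \near g0, V1 (chi g) /\ anc_s X (chi g) = grng g.
  by move: near_sigma; rewrite e0 => /(@grng_continuous G g0).
pose y g := ract X (chi g) g.
have y_g0 : y g0 = x2 by rewrite /y chi_g0 ex2.
have y_c : {for g0, continuous y}.
  apply: ract_continuous_at chi_c _ _; first exact: cvg_id.
  by apply: filterS near_chi => g [].
have near_V2 : \forall g \near g0, V2 (y g).
  by apply: y_c; rewrite y_g0; apply: open_nbhs_nbhs.
exists (fun g => (chi g, y g)); split; first by rewrite chi_g0 y_g0.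
  exact: cvg_pair.
near=> g; have [V1chi echi] : V1 (chi g) /\ anc_s X (chi g) = grng g by near: g.
by split => //; near: g.
Unshelve. all: by end_near.
Qed.

Lemma bracket_slice : slice_arr (bracket_set V1 V2).
Proof.
case: sV1 sV2 => _ sV1s sV1p [_ sV2s sV2p].
split; first by rewrite bracket_setE; exact: locally_factored_open bfactor_local.
- move=> g g' [x1 [x2 [V1x1 V2x2 [e ex2]]]] [x1' [x2' [V1x1' V2x2' [e' ex2']]]] sgg'.
  have xx2 : x2 = x2' by apply: sV2s; rewrite // ex2 ex2' !anc_s_ract.
  have xx1 : x1 = x1'.
    apply: sV1p => //; apply: same_orbit_trans (same_orbit_ract e) _.
    by rewrite -ex2 xx2 ex2'; exact: same_orbit_sym (same_orbit_ract e').
  by subst x1'; apply: (ract_inj e e'); rewrite -ex2 -ex2'.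
- move=> g g' [x1 [x2 [V1x1 V2x2 [e ex2]]]] [x1' [x2' [V1x1' V2x2' [e' ex2']]]] rgg'.
  have xx1 : x1 = x1' by apply: sV1s; rewrite // e e'.
  subst x1'; have xx2 : x2 = x2'.
    apply: sV2p => //; rewrite ex2 ex2'.
    exact: same_orbit_trans (same_orbit_sym (same_orbit_ract e)) (same_orbit_ract e').
  by apply: (ract_inj e e'); rewrite -ex2 -ex2'.
Qed.

Variables (xi eta : cspace X -> Cplx R).
Hypotheses (cxi : Cc_on V1 xi) (ceta : Cc_on V2 eta).

Lemma cinner_bfactor g p : bfactor V1 V2 g p -> cinner xi eta g = (xi p.1)^* * eta p.2.
Proof.
case: sV1 => _ sV1s _; move: p => [x1 x2] [/= V1x1 V2x2 [e ->]].
rewrite /cinner (fsum_supp1 (a := x1)) //.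
move=> x /= ex; rewrite mulf_eq0 negb_or conjC_eq0 => /andP [/(Cc_on_supp cxi) V1x _].
by apply: sV1s => //; rewrite ex e.
Qed.

Lemma cinner_Cc : Cc_on (bracket_set V1 V2) (cinner xi eta).
Proof.
case: (sV1) (sV2) => oV1 _ _ [oV2 _ _].
case: (cxi) (ceta) => _ _ [K1 [cK1 K1V xiK1]] [_ _ [K2 [cK2 K2V etaK2]]].
apply: (Cc_on_intro _ (bracket_compact cK1 cK2)).
- rewrite bracket_setE.
  apply: (locally_factored_continuous bfactor_local
    (F := fun p => (xi p.1)^* * eta p.2)).
  move=> g [x1 x2] gx; split; first exact: cinner_bfactor.
  case: gx => V1x1 V2x2 _; apply: (continuous_mul_pair (F1 := fun x => (xi x)^*)).
  + apply: (continuous_comp (g := Num.conj)); first exact: Cc_on_continuous_at oV1 cxi V1x1.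
    exact: conjC_continuous.
  + exact: Cc_on_continuous_at oV2 ceta V2x2.
- exact: bracket_setS.
- by move=> g /cinner_supp; apply: bracket_setS.
Qed.

End InnerProduct.

Section LeftProduct.
Variables (H G : etale_groupoid) (X : groupoid_corr H G) (R : realType).
Implicit Types (Z : set (garr H)) (V : set (cspace X)).

Definition lfactor Z V (y : cspace X) (p : garr H * cspace X) :=
  [/\ Z p.1, V p.2, gsrc p.1 = anc_r X p.2 & lact X p.1 p.2 = y].

Lemma lprodE Z V : lprod Z V = [set y | exists p, lfactor Z V y p].
Proof.
apply/seteqP; split => [_ [h [x [Zh Vx e ->]]] | _ [[h x] [Zh Vx e <-]]].
- by exists (h, x).
- by exists h, x.
Qed.

Lemma lprodS Z Z' V V' : Z `<=` Z' -> V `<=` V' -> lprod Z V `<=` lprod Z' V'.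
Proof. by move=> ZZ' VV' _ [h [x [Zh Vx e ->]]]; exists h, x; split; auto. Qed.

Lemma lprod_compact Z V : compact Z -> compact V -> compact (lprod Z V).
Proof.
move=> cZ cV.
have -> : lprod Z V = (fun p => lact X p.1 p.2) @`
    ((Z `*` V) `&` [set p | gsrc p.1 = anc_r X p.2]).
  apply/seteqP; split => [_ [h [x [Zh Vx e ->]]] | _ [[h x] [[Zh Vx] /= e] <-]].
  - by exists (h, x).
  - by exists h, x.
apply: continuous_compact; first by apply: continuous_subspaceW (@lact_cont _ _ X) => p [].
exact: compact_fiber (@obj_hausdorff H) (@gsrc_continuous H) (@anc_r_cont _ _ X) cZ cV.
Qed.

Lemma conv_l_supp (zet : garr H -> Cplx R) (xi : cspace X -> Cplx R) :
  [set y | conv_l zet xi y != 0] `<=` lprod [set h | zet h != 0] [set x | xi x != 0].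
Proof.
move=> y /fsum_neq0 [h /= /esym yh]; rewrite mulf_eq0 negb_or => /andP [zet_h xi_hy].
exists h, (lact X (ginv h) y); split => //; last by rewrite lactKV.
by rewrite anc_r_lact ?gsrc_inv ?grng_inv.
Qed.

Variables (Z : set (garr H)) (V : set (cspace X)).
Hypotheses (sZ : slice_arr Z) (sV : slice_sp V).

Lemma lfactor_uniq y p q : lfactor Z V y p -> lfactor Z V y q -> p = q.
Proof.
case: sZ => _ _ sZr.
move: p q => [h x] [h' x'] [/= Zh Vx e <-] [/= Zh' Vx' e' ehx].
have hh' : h = h' by apply: sZr => //; rewrite -(anc_r_lact e) -(anc_r_lact e') ehx.
by subst h'; rewrite (lact_inj e e' (esym ehx)).
Qed.

Lemma lfactor_local : locally_factored (lfactor Z V).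
Proof.
case: sZ sV => oZ _ sZr [oV _ _].
move=> _ [h0 x0] [/= Zh0 Vx0 e0 <-]; set y0 := lact X h0 x0.
have [sigma [sigma_h0 sigma_c near_sigma]] :=
  local_homeo_section (grng_local_homeo H) oZ sZr Zh0.
pose psi y := sigma (anc_r X y).
have ry0 : anc_r X y0 = grng h0 by rewrite anc_r_lact.
have psi_y0 : psi y0 = h0 by rewrite /psi ry0.
have psi_c : {for y0, continuous psi}.
  by apply: continuous_comp (@anc_r_cont _ _ X y0) _; rewrite ry0.
have near_psi : \forall y \near y0, Z (psi y) /\ grng (psi y) = anc_r X y.
  by move: near_sigma; rewrite -ry0 => /(@anc_r_cont _ _ X y0).
pose x y := lact X (ginv (psi y)) y.
have x_y0 : x y0 = x0 by rewrite /x psi_y0 lactK.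
have x_c : {for y0, continuous x}.
  apply: lact_continuous_at; first exact: continuous_comp psi_c (@ginv_cont H _).
    exact: cvg_id.
  by apply: filterS near_psi => y [_ e]; rewrite gsrc_inv e.
have near_V : \forall y \near y0, V (x y).
  by apply: x_c; rewrite x_y0; apply: open_nbhs_nbhs.
exists (fun y => (psi y, x y)); split; first by rewrite psi_y0 x_y0.
  exact: cvg_pair.
near=> y; have [Zpsi rpsi] : Z (psi y) /\ grng (psi y) = anc_r X y by near: y.
split => //=; first by near: y.
  by rewrite anc_r_lact ?gsrc_inv ?grng_inv.
by rewrite lactKV.
Unshelve. all: by end_near.
Qed.

Lemma lprod_slice : slice_sp (lprod Z V).
Proof.
case: sZ sV => _ sZs sZr [_ sVs sVp].
split; first by rewrite lprodE; exact: locally_factored_open lfactor_local.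
- move=> _ _ [h [x [Zh Vx e ->]]] [h' [x' [Zh' Vx' e' ->]]].
  rewrite !anc_s_lact // => /(sVs _ _ Vx Vx') xx'; subst x'.
  by rewrite (sZs h h') // e e'.
- move=> _ _ [h [x [Zh Vx e ->]]] [h' [x' [Zh' Vx' e' ->]]] [k [ek orb]].
  have hh' : h = h'.
    by apply: sZr => //; rewrite -(anc_r_lact e) -(anc_r_lact e') orb anc_r_ract.
  subst h'; rewrite anc_s_lact // in ek; rewrite -lact_ract // in orb.
  have x'_xk : x' = ract X x k by apply: (lact_inj e') => //; rewrite anc_r_ract.
  by rewrite (sVp x x') // x'_xk; exact: same_orbit_ract.
Qed.

Variables (zet : garr H -> Cplx R) (xi : cspace X -> Cplx R).
Hypotheses (czet : Cc_on Z zet) (cxi : Cc_on V xi).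

Lemma conv_l_lfactor y p : lfactor Z V y p -> conv_l zet xi y = zet p.1 * xi p.2.
Proof.
case: sZ => _ _ sZr; move: p => [h x] [/= Zh Vx e <-].
rewrite /conv_l (fsum_supp1 (a := h)) /=.
- by rewrite lactK.
- by rewrite anc_r_lact.
move=> k /= rk; rewrite mulf_eq0 negb_or => /andP [/(Cc_on_supp czet) Zk _].
by apply: sZr => //; rewrite rk anc_r_lact.
Qed.

Lemma conv_l_Cc : Cc_on (lprod Z V) (conv_l zet xi).
Proof.
case: (sZ) (sV) => oZ _ _ [oV _ _].
case: (czet) (cxi) => _ _ [K1 [cK1 K1Z zetK1]] [_ _ [K2 [cK2 K2V xiK2]]].
apply: (Cc_on_intro _ (lprod_compact cK1 cK2)).
- rewrite lprodE.
  apply: (locally_factored_continuous lfactor_local (F := fun p => zet p.1 * xi p.2)).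
  move=> y [h x] yhx; split; first exact: conv_l_lfactor.
  case: yhx => Zh Vx _ _; apply: continuous_mul_pair.
  + exact: Cc_on_continuous_at oZ czet Zh.
  + exact: Cc_on_continuous_at oV cxi Vx.
- exact: lprodS.
- by move=> y /conv_l_supp; apply: lprodS.
Qed.

End LeftProduct.

Lemma exists_unique_factor (T U : Type) (Q : T -> U -> Prop) :
  (forall t p q, Q t p -> Q t q -> p = q) ->
  forall t, (exists p, Q t p) -> exists! p, Q t p.
Proof. by move=> Quniq t [p Qp]; exists p; split => // q; exact: Quniq. Qed.

Theorem lemma7p4 (R : realType) (H G : etale_groupoid) (X : groupoid_corr H G)
  (V1 V2 : set (cspace X)) (W : set (garr G)) (Z : set (garr H))
  (xi eta : cspace X -> Cplx R) (gam : garr G -> Cplx R) (zet : garr H -> Cplx R) :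
  slice_sp V1 -> slice_sp V2 -> slice_arr W -> slice_arr Z ->
  Cc_on V1 xi -> Cc_on V2 eta -> Cc_on W gam -> Cc_on Z zet ->
  (* the three products are slices *)
  (slice_sp (rprod V1 W) /\ slice_arr (bracket_set V1 V2) /\ slice_sp (lprod Z V1)) /\
  (* V1 W *)
  ((forall y, rprod V1 W y ->
      exists! p : cspace X * garr G,
        [/\ V1 p.1, W p.2, anc_s X p.1 = grng p.2 & ract X p.1 p.2 = y]) /\
   Cc_on (rprod V1 W) (conv_r xi gam) /\
   (forall x g, V1 x -> W g -> anc_s X x = grng g ->
      conv_r xi gam (ract X x g) = xi x * gam g)) /\
  (* <V1|V2> *)
  ((forall g, bracket_set V1 V2 g ->
      exists! p : cspace X * cspace X,
        [/\ V1 p.1, V2 p.2 & bracket_rel p.1 p.2 g]) /\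
   Cc_on (bracket_set V1 V2) (cinner xi eta) /\
   (forall x1 x2 g, V1 x1 -> V2 x2 -> bracket_rel x1 x2 g ->
      cinner xi eta g = (xi x1)^* * eta x2)) /\
  (* Z V1 *)
  ((forall y, lprod Z V1 y ->
      exists! p : garr H * cspace X,
        [/\ Z p.1, V1 p.2, gsrc p.1 = anc_r X p.2 & lact X p.1 p.2 = y]) /\
   Cc_on (lprod Z V1) (conv_l zet xi) /\
   (forall h x, Z h -> V1 x -> gsrc h = anc_r X x ->
      conv_l zet xi (lact X h x) = zet h * xi x)).
Proof.
move=> sV1 sV2 sW sZ cxi ceta cgam czet.
split; first by split; [|split]; [exact: rprod_slice | exact: bracket_slice | exact: lprod_slice].
split; [|split].
- split; first by move=> y; rewrite rprodE; apply: exists_unique_factor; exact: rfactor_uniq.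
  split; first exact: conv_r_Cc.
  by move=> x g Vx Wg e; apply: (conv_r_rfactor (V := V1) sW xi cgam (p := (x, g))).
- split; first by move=> g; rewrite bracket_setE; apply: exists_unique_factor; exact: bfactor_uniq.
  split; first exact: cinner_Cc.
  by move=> x1 x2 g V1x1 V2x2 gx; apply: (cinner_bfactor (V2 := V2) sV1 eta cxi (p := (x1, x2))).
- split; first by move=> y; rewrite lprodE; apply: exists_unique_factor; exact: lfactor_uniq.
  split; first exact: conv_l_Cc.
  by move=> h x Zh Vx e; apply: (conv_l_lfactor (V := V1) sZ xi czet (p := (h, x))).
Qed.
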